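(* Let $\varepsilon\in(0,3)$. There exists $n_0$ (depending on $\varepsilon$) such that for every $n\ge n_0$ and every real normed space $X$ of dimension $n$ there exists an approximately convex set $A\subseteq X$ with $$\mathcal{H}(A,\operatorname{Co}(A))\ge\log_2 n-\varepsilon\qquad\text{and}\qquad \operatorname{diam}(A)\le \frac{25}{\varepsilon}(\log_2 n)^2\, d(X,\ell_1^n).$$
   Context: A set $A$ is approximately convex if $d(tx+(1-t)y,A)\le1$ for all $x,y\in A$, $t\in[0,1]$, where $d(x,A)=\inf_{a\in A}\|x-a\|$. $\mathcal{H}$ is the Hausdorff distance, $\operatorname{Co}$ the convex hull, $\operatorname{diam}(A)=\sup\{\|x-y\|:x,y\in A\}$. $d(X,Y)=\inf\{\|T\|\|T^{-1}\|: T:X\to Y \text{ a linear isomorphism}\}$ is the Banach–Mazur distance, and $\ell_1^n$ is $\mathbb{R}^n$ with the norm $\sum|a_i|$. *)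

From HB Require Import structures.
From mathcomp Require Import all_boot all_order all_algebra.
From mathcomp Require Import all_classical all_reals.
From mathcomp Require Import ereal exp.

Set Implicit Arguments.
Unset Strict Implicit.
Unset Printing Implicit Defensive.

Import Order.TTheory GRing.Theory Num.Theory.
Local Open Scope ring_scope.
Local Open Scope classical_set_scope.

Section Defs.
Variables (R : realType) (n : nat).
Local Notation V := 'rV[R]_n.

(* A norm on R^n; every real normed space of dimension n is isometric to
   (R^n, N) for such an N. *)
Definition is_norm (N : V -> R) : Prop :=
  [/\ forall x, N x = 0 -> x = 0,
      forall (a : R) x, N (a *: x) = `|a| * N x &
      forall x y, N (x + y) <= N x + N y].

Definition l1norm (x : V) : R := \sum_(i < n) `|x ord0 i|.

(* d(x, A) = inf_{a in A} ||x - a|| (extended real; +oo for empty A) *)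
Definition dist_set (N : V -> R) (x : V) (A : set V) : \bar R :=
  ereal_inf [set (N (x - a))%:E | a in A].

Definition approx_convex (N : V -> R) (A : set V) : Prop :=
  forall x y t, A x -> A y -> 0 <= t <= 1 ->
    (dist_set N (t *: x + (1 - t) *: y) A <= 1%:E)%E.

Definition hausdorff (N : V -> R) (A B : set V) : \bar R :=
  maxe (ereal_sup [set dist_set N a B | a in A])
       (ereal_sup [set dist_set N b A | b in B]).

Definition conv_hull (A : set V) : set V :=
  [set x | exists k (p : 'I_k -> V) (w : 'I_k -> R),
     [/\ forall i, A (p i), forall i, 0 <= w i, \sum_(i < k) w i = 1 &
         x = \sum_(i < k) w i *: p i]].

Definition diam (N : V -> R) (A : set V) : \bar R :=
  ereal_sup [set (N (x - y))%:E | x in A & y in A].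

Definition opnorm (N1 N2 : V -> R) (T : 'M[R]_n) : \bar R :=
  ereal_sup [set (N2 (x *m T))%:E | x in [set x | N1 x <= 1]].

Definition bm_dist_l1 (N : V -> R) : \bar R :=
  ereal_inf [set (opnorm N l1norm T * opnorm l1norm N (invmx T))%E
            | T in [set T : 'M[R]_n | T \in unitmx]].

End Defs.

Definition log2 (R : realType) (x : R) : R := ln x / ln 2.

From HB Require Import structures.
From mathcomp Require Import all_boot all_order all_algebra.
From mathcomp Require Import all_classical all_reals.
From mathcomp Require Import ereal exp normedtype derive.
From mathcomp Require Import ring lra.
Import Order.TTheory GRing.Theory Num.Theory.
Import numFieldNormedType.Exports.
Local Open Scope ring_scope.
Local Open Scope classical_set_scope.

Set Implicit Arguments.
Unset Strict Implicit.
Unset Printing Implicit Defensive.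

(* Take an isomorphism [T] onto l_1^n with [|T| |T^-1|] close to d(X, l_1^n),
   and a vector [v] of norm at most 1 almost norming the functional
   [psi x = sum_i (x T)_i].  The set
     A = { lam p T^-1 + t v : p a probability vector, H(p) <= t <= log2 n },
   with [lam = 4 (log2 n)^2 |T| / eps] and [H] the binary entropy, is
   approximately convex because [H] is concave up to one bit:
   H(s p + (1 - s) q) <= s H(p) + (1 - s) H(q) + 1.  The barycentre
   [lam u T^-1] ([u] uniform) of the points [lam e_i T^-1] of [A] lies in the
   convex hull, yet is at distance at least [log2 n - eps] from [A]: when [p]
   is l_1-close to [u], [t >= H(p)] is close to [log2 n] and [psi] sees the
   [t v] component; otherwise the [lam]-scaled l_1 distance already exceeds
   [2 log2 n].  The diameter is at most [2 lam |T^-1| + log2 n]. *)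

Section Logarithm.
Variable R : realType.
Implicit Types x y s k : R.

Lemma ln_le_subr1 x : 0 < x -> ln x <= x - 1.
Proof.
by move=> x0; have := @le_ln1Dx R (x - 1); rewrite addrCA subrr addr0; apply; lra.
Qed.

Lemma lnM_xlnx s x : 0 <= s -> 0 <= x ->
  (s * x) * ln (s * x) = s * (x * ln x) + x * (s * ln s).
Proof.
rewrite le_eqVlt => /orP[/eqP<-|s0]; first by rewrite !mul0r mulr0 addr0.
rewrite le_eqVlt => /orP[/eqP<-|x0]; first by rewrite !(mul0r, mulr0) addr0.
by rewrite lnM ?posrE //; ring.
Qed.

Lemma xlnx_superadditive x y : 0 <= x -> 0 <= y ->
  x * ln x + y * ln y <= (x + y) * ln (x + y).
Proof.
rewrite le_eqVlt => /orP[/eqP<-|x0]; first by rewrite mul0r !add0r.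
rewrite le_eqVlt => /orP[/eqP<-|y0]; first by rewrite mul0r !addr0.
by rewrite mulrDl; apply: lerD; rewrite ler_pM2l // ler_ln ?posrE //; lra.
Qed.

(* [ln_le_subr1] at [1 / (k x)]. *)
Lemma oppr_xlnx_le x k : 0 <= x -> 0 < k -> - (x * ln x) <= x * ln k + k^-1 - x.
Proof.
rewrite le_eqVlt => /orP[/eqP<-|x0] k0.
  by rewrite !mul0r oppr0; have := invr_gt0 k; rewrite k0; lra.
have kx0 : 0 < k * x by exact: mulr_gt0.
have : 0 < (k * x)^-1 by rewrite invr_gt0.
move/ln_le_subr1; rewrite lnV ?posrE // lnM ?posrE // => h.
have : x * (- (ln k + ln x)) <= x * ((k * x)^-1 - 1) by rewrite ler_pM2l.
have -> : x * ((k * x)^-1 - 1) = k^-1 - x.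
  by rewrite mulrBr mulr1 invfM mulrCA mulfV ?mulr1 ?gt_eqF.
lra.
Qed.

Lemma oppr_xlnx_ge x k : 0 < k -> 1 <= ln k -> 0 <= x <= 1 ->
  k^-1 * ln k - `|x - k^-1| * ln k <= - (x * ln x).
Proof.
move=> k0 lk /andP[x0 x1]; have ki : 0 < k^-1 by rewrite invr_gt0.
have [xk|kx] := leP x k^-1.
  rewrite ler0_norm ?subr_le0 //.
  have -> : k^-1 * ln k - - (x - k^-1) * ln k = x * ln k by ring.
  move: x0; rewrite le_eqVlt => /orP[/eqP<-|x0]; first by rewrite !mul0r oppr0.
  rewrite -mulrN ler_pM2l // -lnV ?posrE // ler_ln ?posrE ?invr_gt0 //.
  by rewrite -[k]invrK lef_pV2 ?posrE ?invr_gt0.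
rewrite gtr0_norm ?subr_gt0 //.
have xp : 0 < x by exact: lt_trans ki kx.
have hx : ln x = ln (k * x) - ln k by rewrite lnM ?posrE //; ring.
have hkx : ln (k * x) <= k * x - 1 by apply: ln_le_subr1; exact: mulr_gt0.
have lx0 : ln x <= 0 by exact: ln_le0.
have h1 : k^-1 * (- ln x) <= x * (- ln x) by apply: ler_wpM2r; lra.
have h2 : k^-1 * ln k - (x - k^-1) <= k^-1 * (- ln x).
  rewrite hx.
  have -> : k^-1 * ln k - (x - k^-1) = k^-1 * (ln k - (k * x - 1)).
    by rewrite mulrBr mulrBr mulrA mulVf ?mul1r ?mulr1 ?gt_eqF.
  by rewrite ler_pM2l //; lra.
have h3 : x - k^-1 <= (x - k^-1) * ln k by rewrite ler_peMr // subr_ge0 ltW.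
nra.
Qed.

Lemma ln2_gt0 : 0 < ln (2 : R).
Proof. by apply: ln_gt0; rewrite ltr1n. Qed.

Lemma ln2_ge_half : 2^-1 <= ln (2 : R).
Proof.
have : 0 < (2 : R)^-1 by rewrite invr_gt0.
move/ln_le_subr1; rewrite lnV ?posrE ?ltr0n //.
have -> : (2:R)^-1 - 1 = - 2^-1 by field.
lra.
Qed.

Lemma log2_ge2 (n : nat) : (4 <= n)%N -> 2 <= log2 (n%:R : R).
Proof.
move=> hn; rewrite /log2 ler_pdivlMr ?ln2_gt0 //.
have -> : 2 * ln (2:R) = ln 4%:R by rewrite (natrM R 2 2) lnM ?posrE ?ltr0n //; ring.
by rewrite ler_ln ?posrE ?ltr0n ?ler_nat //; case: n hn.
Qed.

End Logarithm.

Section Entropy.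
Variables (R : realType) (n : nat).
Implicit Types p q : 'rV[R]_n.

Definition probvec p := (forall i, 0 <= p 0 i) /\ \sum_i p 0 i = 1.

Definition entropy p : R := \sum_i - (p 0 i * ln (p 0 i)).

Definition entropy2 p : R := entropy p / ln 2.

Definition unif : 'rV[R]_n := const_mx n%:R^-1.

Lemma probvec_dim_gt0 p : probvec p -> (0 < n)%N.
Proof.
move=> [_]; case: (posnP n) => // n0; rewrite big1 => [/eqP|i _].
  by rewrite eq_sym oner_eq0.
by have := ltn_ord i; rewrite {2}n0.
Qed.

Lemma probvec_le1 p i : probvec p -> p 0 i <= 1.
Proof. by move=> [p0 <-]; rewrite (bigD1 i) //= lerDl sumr_ge0. Qed.

Lemma probvec_mix p q s : probvec p -> probvec q -> 0 <= s <= 1 ->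
  probvec (s *: p + (1 - s) *: q).
Proof.
move=> [p0 p1] [q0 q1] /andP[s0 s1]; split.
  by move=> i; rewrite !mxE addr_ge0 // mulr_ge0 //; lra.
under eq_bigr do rewrite !mxE.
by rewrite big_split /= -!mulr_sumr p1 q1; ring.
Qed.

Lemma probvec_delta (i : 'I_n) : probvec 'e_i.
Proof.
split=> [j|]; first by rewrite mxE ler0n.
rewrite (bigD1 i) //= mxE !eqxx big1 ?addr0 // => j /negbTE ji.
by rewrite mxE ji.
Qed.

Lemma probvec_unif : (0 < n)%N -> probvec unif.
Proof.
move=> n0; split=> [i|]; first by rewrite mxE invr_ge0 ler0n.
under eq_bigr do rewrite mxE.
by rewrite sumr_const card_ord -[LHS]mulr_natr mulVf // pnatr_eq0 -lt0n.
Qed.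

Lemma entropy_delta (i : 'I_n) : entropy 'e_i = 0.
Proof.
by apply: big1 => j _; rewrite mxE; case: (j == i); rewrite ?ln1 ?mul0r ?mulr0 oppr0.
Qed.

Lemma entropy_ge0 p : probvec p -> 0 <= entropy p.
Proof.
move=> dp; apply: sumr_ge0 => i _; rewrite oppr_ge0.
by apply: mulr_ge0_le0; [exact: dp.1 | exact/ln_le0/probvec_le1].
Qed.

(* [oppr_xlnx_le] at [k = n], summed over the coordinates. *)
Lemma entropy_le_ln p : probvec p -> entropy p <= ln n%:R.
Proof.
move=> dp; have n0 : 0 < n%:R :> R by rewrite ltr0n (probvec_dim_gt0 dp).
apply: le_trans (_ : \sum_(i < n) (p 0 i * ln n%:R + n%:R^-1 - p 0 i) <= _).
  by apply: ler_sum => i _; apply: oppr_xlnx_le => //; exact: dp.1.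
rewrite sumrB big_split /= -mulr_suml dp.2 mul1r sumr_const card_ord.
have -> : (n%:R : R)^-1 *+ n = 1 by rewrite -[LHS]mulr_natr mulVf ?gt_eqF.
lra.
Qed.

(* The mixture costs at most the entropy of the coin [(s, 1 - s)]. *)
Lemma entropy_mix_le p q s : probvec p -> probvec q -> 0 <= s <= 1 ->
  entropy (s *: p + (1 - s) *: q) <= s * entropy p + (1 - s) * entropy q + ln 2.
Proof.
move=> [p0 p1] [q0 q1] /andP[s0 s1]; have s1' : 0 <= 1 - s by lra.
apply: le_trans (_ : \sum_i (s * (- (p 0 i * ln (p 0 i))) - p 0 i * (s * ln s)
     + ((1 - s) * (- (q 0 i * ln (q 0 i))) - q 0 i * ((1 - s) * ln (1 - s))))
     <= _).
  apply: ler_sum => i _; rewrite !mxE.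
  have := xlnx_superadditive (mulr_ge0 s0 (p0 i)) (mulr_ge0 s1' (q0 i)).
  by rewrite (lnM_xlnx s0 (p0 i)) (lnM_xlnx s1' (q0 i)); lra.
rewrite big_split /= !sumrB -!mulr_sumr -!mulr_suml p1 q1 !mul1r.
have := oppr_xlnx_le s0 (ltr0Sn R 1); have := oppr_xlnx_le s1' (ltr0Sn R 1).
have : (2 : R)^-1 + 2^-1 = 1 by field.
rewrite /entropy; lra.
Qed.

(* [oppr_xlnx_ge] at [k = n], summed over the coordinates. *)
Lemma entropy_near_unif p : probvec p -> 1 <= ln (n%:R : R) ->
  ln n%:R - l1norm (p - unif) * ln n%:R <= entropy p.
Proof.
move=> dp ln1; have n0 : 0 < n%:R :> R by rewrite ltr0n (probvec_dim_gt0 dp).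
apply: le_trans (_ : \sum_(i < n) (n%:R^-1 * ln n%:R - `|p 0 i - n%:R^-1| * ln n%:R)
  <= _); last first.
  by apply: ler_sum => i _; apply: oppr_xlnx_ge => //; rewrite dp.1 probvec_le1.
rewrite sumrB -mulr_suml sumr_const card_ord.
have -> : (n%:R : R)^-1 *+ n = 1 by rewrite -[LHS]mulr_natr mulVf ?gt_eqF.
by rewrite mul1r /l1norm mulr_suml; under eq_bigr do rewrite !mxE.
Qed.

Lemma entropy2_ge0 p : probvec p -> 0 <= entropy2 p.
Proof. by move=> dp; rewrite divr_ge0 ?entropy_ge0 ?ltW ?ln2_gt0. Qed.

Lemma entropy2_le_log2 p : probvec p -> entropy2 p <= log2 (n%:R : R).
Proof. by move=> dp; rewrite ler_pM2r ?invr_gt0 ?ln2_gt0 ?entropy_le_ln. Qed.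

Lemma entropy2_mix_le p q s : probvec p -> probvec q -> 0 <= s <= 1 ->
  entropy2 (s *: p + (1 - s) *: q) <= s * entropy2 p + (1 - s) * entropy2 q + 1.
Proof.
move=> dp dq s01; have l2 := ln2_gt0 R.
rewrite /entropy2.
have -> : s * (entropy p / ln 2) + (1 - s) * (entropy q / ln 2) + 1
    = (s * entropy p + (1 - s) * entropy q + ln 2) / ln 2 by field; rewrite gt_eqF.
by rewrite ler_pM2r ?invr_gt0 ?entropy_mix_le.
Qed.

Lemma entropy2_near_unif p : probvec p -> (4 <= n)%N ->
  log2 (n%:R : R) - l1norm (p - unif) * log2 n%:R <= entropy2 p.
Proof.
move=> dp n4; have l2 := ln2_gt0 R.
have ln1 : 1 <= ln (n%:R : R).
  by have := log2_ge2 R n4; have := ln2_ge_half R; rewrite /log2 ler_pdivlMr //; lra.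
rewrite /log2 mulrA -mulrBl ler_pM2r ?invr_gt0 //; exact: entropy_near_unif.
Qed.

End Entropy.

Section IsNorm.
Variables (R : realType) (n : nat) (N : 'rV[R]_n -> R).
Hypothesis hN : is_norm N.
Implicit Types x y : 'rV[R]_n.

Lemma is_normZ a x : N (a *: x) = `|a| * N x.
Proof. by case: hN => _ h _; exact: h. Qed.

Lemma is_normD x y : N (x + y) <= N x + N y.
Proof. by case: hN => _ _ h; exact: h. Qed.

Lemma is_norm_eq0 x : N x = 0 -> x = 0.
Proof. by case: hN => h _ _; exact: h. Qed.

Lemma is_norm0 : N 0 = 0.
Proof. by rewrite -(scale0r 0) is_normZ normr0 mul0r. Qed.

Lemma is_normN x : N (- x) = N x.
Proof. by rewrite -scaleN1r is_normZ normrN normr1 mul1r. Qed.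

Lemma is_norm_ge0 x : 0 <= N x.
Proof. by have := is_normD x (- x); rewrite subrr is_norm0 is_normN; lra. Qed.

Lemma is_norm_gt0 x : x != 0 -> 0 < N x.
Proof.
move=> x0; rewrite lt_neqAle is_norm_ge0 andbT eq_sym.
by apply: contra_neq x0 => /is_norm_eq0.
Qed.

Lemma is_norm_lerB x y : N x - N y <= N (x - y).
Proof. by have := is_normD (x - y) y; rewrite subrK; lra. Qed.

Lemma is_norm_normalize x : x != 0 -> N ((N x)^-1 *: x) = 1.
Proof.
move=> x0; have Nx := is_norm_gt0 x0.
by rewrite is_normZ ger0_norm ?invr_ge0 ?ltW // mulVf ?gt_eqF.
Qed.

Lemma is_norm_sum (I : finType) (F : I -> 'rV[R]_n) : N (\sum_i F i) <= \sum_i N (F i).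
Proof.
apply: (big_ind2 (fun u w => N u <= w)) => //; first by rewrite is_norm0.
by move=> u w u' w' hu hu'; apply: le_trans (is_normD _ _) _; exact: lerD.
Qed.

(* [S] is the supremum of [f] on the [N]-unit ball. *)
Lemma exists_norming_vector (f : 'rV[R]_n -> R) (a d : R) :
  (forall c x, f (c *: x) = c * f x) -> (forall x, f x <= a * N x) ->
  (exists u, 0 < f u) -> 0 < d ->
  exists S v, [/\ 0 < S, forall x, f x <= S * N x, N v <= 1 & S * (1 - d) < f v].
Proof.
move=> fZ fa [u fu] d0.
have f0 : f 0 = 0 by rewrite -(scale0r 0) fZ mul0r.
have u0 : u != 0 by apply: contraTneq fu => ->; rewrite f0 ltxx.
pose E := [set f x | x in [set x | N x <= 1]].
have hE : has_sup E.
  split; first by exists (f 0), 0 => //=; rewrite is_norm0.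
  have a0 : 0 < a.
    by rewrite -(pmulr_lgt0 _ (is_norm_gt0 u0)); exact: lt_le_trans fu (fa u).
  by exists a => _ [x /= Nx <-]; apply: le_trans (fa x) _; rewrite ler_piMr // ltW.
have ball_le x : x != 0 -> f ((N x)^-1 *: x) <= sup E.
  move=> x0; apply: (sup_upper_bound hE).
  by exists ((N x)^-1 *: x); rewrite /= ?is_norm_normalize.
have S0 : 0 < sup E.
  by apply: lt_le_trans (ball_le _ u0); rewrite fZ mulr_gt0 ?invr_gt0 ?is_norm_gt0.
have [_ [v /= Nv <-] hv] : exists2 w, E w & sup E - sup E * d < w.
  by apply: sup_adherent hE; rewrite mulr_gt0.
exists (sup E), v; split => //; last by rewrite mulrBr mulr1.
move=> x; have [->|x0] := eqVneq x 0; first by rewrite f0 is_norm0 mulr0.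
by have := ball_le _ x0; rewrite fZ ler_pdivrMl ?is_norm_gt0 // mulrC.
Qed.

Lemma is_norm_le_l1 : exists2 b, 0 < b & forall y, N y <= b * l1norm y.
Proof.
pose K := \sum_i N 'e_i.
have K0 : 0 <= K by apply: sumr_ge0 => i _; exact: is_norm_ge0.
exists (1 + K) => [|y]; first lra.
rewrite {1}(row_sum_delta y); apply: le_trans (is_norm_sum _) _.
apply: le_trans (_ : \sum_i `|y 0 i| * K <= _).
  apply: ler_sum => i _; rewrite is_normZ ler_wpM2l //.
  by rewrite /K (bigD1 i) //= lerDl; apply: sumr_ge0 => j _; exact: is_norm_ge0.
by rewrite -mulr_suml mulrC ler_wpM2r ?sumr_ge0 //; lra.
Qed.

Lemma l1_le_mx_norm x : l1norm x <= n%:R * `|x|.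
Proof.
have entry_le i : `|x 0 i| <= `|x|.
  by rewrite [leRHS]/Num.norm /= mx_normrE; apply/bigmax_geP; right; exists (0, i).
apply: le_trans (_ : \sum_(i < n) `|x| <= _); first exact: ler_sum.
by rewrite sumr_const card_ord mulr_natl.
Qed.

Lemma is_norm_continuous : continuous N.
Proof.
have [b b0 hb] := is_norm_le_l1.
have bn : 0 <= b * n%:R by rewrite mulr_ge0 ?ler0n // ltW.
have K0 : 0 < b * n%:R + 1 by lra.
move=> x; apply/(@cvgrPdist_lt _ _ _ _ (nbhs_filter x)) => e e0.
have : \forall y \near x, `|x - y| < e / (b * n%:R + 1).
  by apply: (@cvgr_dist_lt _ _ _ _ _ id x (@cvg_id _ (nbhs x))); rewrite divr_gt0.
apply: filterS => y hy /=.
have h1 : `|N x - N y| <= N (x - y).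
  rewrite ler_norml is_norm_lerB andbT.
  by have := is_norm_lerB y x; rewrite -(is_normN (y - x)) opprB; lra.
have h2 : N (x - y) <= b * n%:R * `|x - y|.
  by apply: le_trans (hb _) _; rewrite -mulrA ler_wpM2l ?l1_le_mx_norm // ltW.
have h3 : (b * n%:R + 1) * `|x - y| < e by rewrite mulrC -ltr_pdivlMr.
have : b * n%:R * `|x - y| <= (b * n%:R + 1) * `|x - y| by rewrite ler_wpM2r // lerDl.
lra.
Qed.

(* [N] attains a positive minimum on the compact max-norm unit sphere. *)
Lemma l1_le_is_norm : (0 < n)%N -> exists2 c, 0 < c & forall x, l1norm x <= c * N x.
Proof.
move=> n0; pose S := [set x : 'rV[R]_n | `|x| = 1].
have cS : compact S.
  apply: bounded_closed_compact.
    rewrite /= /bounded_near; near=> M => x /= ->.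
    by near: M; apply: nbhs_pinfty_ge; exact: num_real.
  exact: (proj1 (continuous_closedP _) (@norm_continuous _ 'rV[R]_n) _ (@closed_eq _ 1)).
have unit_sphere x : x != 0 -> S (`|x|^-1 *: x).
  by move=> x0; rewrite /S /= normrZ normfV normr_id mulVf // normr_eq0.
have e0 : 'e_(Ordinal n0) != 0 :> 'rV[R]_n.
  apply/eqP => /rowP /(_ (Ordinal n0)); rewrite !mxE !eqxx /= => /eqP.
  by rewrite oner_eq0.
have S0 : S !=set0 by eexists; exact: unit_sphere e0.
have cN : {within S, continuous N}.
  by apply: continuous_subspaceT; exact: is_norm_continuous.
have [c Sc hc] := EVT_min_rV S0 cS cN.
rewrite inE /S /= in Sc.
have Nc : 0 < N c by rewrite is_norm_gt0 // -normr_gt0 Sc ltr01.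
exists (n%:R / N c) => [|x]; first by rewrite divr_gt0 // ltr0n.
have [->|x0] := eqVneq x 0.
  by rewrite is_norm0 mulr0 /l1norm big1 // => i _; rewrite mxE normr0.
have := hc _ (mem_set (unit_sphere _ x0)); rewrite is_normZ normfV normr_id => h.
apply: le_trans (l1_le_mx_norm x) _.
by rewrite mulrAC ler_pdivlMr // -mulrA ler_wpM2l ?ler0n // -ler_pdivlMl ?normr_gt0.
Unshelve. all: by end_near.
Qed.

End IsNorm.

Arguments is_norm_le_l1 {R n N}.
Arguments l1_le_is_norm {R n N}.

Section L1.
Variables (R : realType) (n : nat).

Lemma l1norm_is_norm : is_norm (@l1norm R n).
Proof.
split=> [x x0|a x|x y]; rewrite /l1norm.
- apply/rowP => i; rewrite mxE; apply/normr0_eq0/le_anti.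
  by rewrite normr_ge0 andbT -x0 /l1norm (bigD1 i) //= lerDl sumr_ge0.
- by rewrite mulr_sumr; apply: eq_bigr => i _; rewrite mxE normrM.
- by rewrite -big_split; apply: ler_sum => i _; rewrite mxE ler_normD.
Qed.

Lemma l1norm_probvec (p : 'rV[R]_n) : probvec p -> l1norm p = 1.
Proof. by move=> [p0 <-]; apply: eq_bigr => i _; rewrite ger0_norm. Qed.

End L1.

Section CoordSum.
Variables (R : realType) (n : nat) (T : 'M[R]_n).
Implicit Types x y : 'rV[R]_n.

Definition coord_sum x : R := \sum_i (x *m T) 0 i.

Lemma coord_sumZ c x : coord_sum (c *: x) = c * coord_sum x.
Proof. by rewrite /coord_sum mulr_sumr; apply: eq_bigr => i _; rewrite -scalemxAl mxE. Qed.

Lemma coord_sumB x y : coord_sum (x - y) = coord_sum x - coord_sum y.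
Proof. by rewrite /coord_sum -sumrB; apply: eq_bigr => i _; rewrite mulmxBl !mxE. Qed.

Lemma coord_sumD x y : coord_sum (x + y) = coord_sum x + coord_sum y.
Proof. by rewrite /coord_sum -big_split; apply: eq_bigr => i _; rewrite mulmxDl mxE. Qed.

Lemma coord_sum_le_l1 x : coord_sum x <= l1norm (x *m T).
Proof. by apply: ler_sum => i _; exact: ler_norm. Qed.

Lemma coord_sum_invmx y : T \in unitmx -> coord_sum (y *m invmx T) = \sum_i y 0 i.
Proof. by move=> hT; rewrite /coord_sum mulmxKV. Qed.

End CoordSum.

Section OperatorNorm.
Variables (R : realType) (n : nat) (N1 N2 : 'rV[R]_n -> R).
Hypotheses (hN1 : is_norm N1) (hN2 : is_norm N2).

Lemma opnorm_ub (T : 'M[R]_n) x :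
  N1 x <= 1 -> ((N2 (x *m T))%:E <= opnorm N1 N2 T)%E.
Proof. by move=> hx; apply: ereal_sup_ubound; exists x. Qed.

Lemma opnorm_bound (T : 'M[R]_n) c :
  opnorm N1 N2 T = c%:E -> forall x, N2 (x *m T) <= c * N1 x.
Proof.
move=> hc x; have [->|x0] := eqVneq x 0.
  by rewrite mul0mx !is_norm0 // mulr0.
have := @opnorm_ub T ((N1 x)^-1 *: x) ltac:(by rewrite is_norm_normalize).
rewrite hc lee_fin -scalemxAl is_normZ // ger0_norm ?invr_ge0 ?is_norm_ge0 //.
by rewrite mulrC ler_pdivrMr ?is_norm_gt0.
Qed.

End OperatorNorm.

Section BanachMazurL1.
Variables (R : realType) (n : nat) (N : 'rV[R]_n -> R).
Hypotheses (hN : is_norm N) (n0 : (0 < n)%N).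
Let e0 : 'rV[R]_n := 'e_(Ordinal n0).
Local Notation l1 := (@l1norm R n).

Lemma l1norm_delta0 : l1norm e0 = 1.
Proof. exact/l1norm_probvec/probvec_delta. Qed.

Lemma preimage_delta0_neq0 (T : 'M[R]_n) : T \in unitmx -> e0 *m invmx T != 0.
Proof.
move=> hT; apply/eqP => /(congr1 (mulmx^~ T)); rewrite mulmxKV // mul0mx => e00.
have := l1norm_delta0; rewrite e00 (is_norm0 (@l1norm_is_norm R n)) => /eqP.
by rewrite eq_sym oner_eq0.
Qed.

(* Both operator norms are tested on the preimage [u] of a basis vector. *)
Lemma opnorm_l1_lb (T : 'M[R]_n) : T \in unitmx -> exists2 r, 0 < r &
  ((r^-1)%:E <= opnorm N l1 T)%E /\ (r%:E <= opnorm l1 N (invmx T))%E.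
Proof.
move=> hT; set u := e0 *m invmx T; have u0 : u != 0 by exact: preimage_delta0_neq0.
exists (N u); first exact: is_norm_gt0.
split; last by apply: opnorm_ub; rewrite l1norm_delta0.
have := @opnorm_ub _ _ N l1 T ((N u)^-1 *: u) ltac:(by rewrite is_norm_normalize).
rewrite -scalemxAl (is_normZ (@l1norm_is_norm R n)) /u mulmxKV // l1norm_delta0 mulr1.
by rewrite ger0_norm // invr_ge0 is_norm_ge0.
Qed.

Lemma bm_dist_l1_ge1 : (1%:E <= bm_dist_l1 N)%E.
Proof.
apply: le_ereal_inf_tmp => _ [T /= hT <-].
have [r r0 [ha hb]] := opnorm_l1_lb hT.
apply: le_trans (_ : ((r^-1)%:E * r%:E <= _)%E); first by rewrite -EFinM mulVf ?gt_eqF.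
by apply: lee_pmul => //; rewrite lee_fin ltW // invr_gt0.
Qed.

Lemma l1_iso_consts (T : 'M[R]_n) (a b : R) : T \in unitmx ->
  (forall x, l1norm (x *m T) <= a * N x) -> (forall y, N (y *m invmx T) <= b * l1norm y) ->
  [/\ 0 < a, 0 < b & 1 <= a * b].
Proof.
move=> hT hTa hTb; set u := e0 *m invmx T.
have Nu : 0 < N u by exact/is_norm_gt0/preimage_delta0_neq0.
have h1 : 1 <= a * N u by have := hTa u; rewrite /u mulmxKV // l1norm_delta0.
have h2 : N u <= b by have := hTb e0; rewrite l1norm_delta0 mulr1.
have a0 : 0 < a by rewrite -(pmulr_lgt0 _ Nu); exact: lt_le_trans ltr01 h1.
by split=> //; [exact: lt_le_trans h2 | apply: le_trans h1 _; rewrite ler_pM2l].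
Qed.

Lemma bm_dist_l1_nearly_attained (k : R) : 1 < k -> exists T a b,
  [/\ T \in unitmx, forall x, l1norm (x *m T) <= a * N x,
      forall y, N (y *m invmx T) <= b * l1norm y &
      ((a * b)%:E <= k%:E * bm_dist_l1 N)%E].
Proof.
move=> k1; have := bm_dist_l1_ge1.
case Ed: (bm_dist_l1 N) => [d| |] // d1; last first.
  have [c c0 hc] := l1_le_is_norm hN n0; have [b b0 hb] := is_norm_le_l1 hN.
  exists 1%:M, c, b; split.
  - exact: unitmx1.
  - by move=> x; rewrite mulmx1.
  - by move=> y; rewrite invmx1 mulmx1.
  - by rewrite gt0_muley ?lte_fin ?leey //; lra.
rewrite lee_fin in d1.
have ep : 0 < d * (k - 1) by apply: mulr_gt0; lra.
have hd : bm_dist_l1 N \is a fin_num by rewrite Ed.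
have [_ [T /= hT <-]] := lb_ereal_inf_adherent ep hd.
rewrite -/(bm_dist_l1 N) Ed -EFinD => hprod.
have [r r0 [ha hb]] := opnorm_l1_lb hT.
have ra : (0 < opnorm N l1 T)%E by apply: lt_le_trans ha; rewrite lte_fin invr_gt0.
have rb : (0 < opnorm l1 N (invmx T))%E by apply: lt_le_trans hb; rewrite lte_fin.
case Ea: (opnorm N l1 T) ra hprod => [a| |] // ra; last by rewrite gt0_mulye.
case Eb: (opnorm l1 N (invmx T)) rb => [b| |] // rb; last by rewrite gt0_muley.
rewrite -EFinM lte_fin => hprod.
exists T, a, b; split => //.
- exact: (opnorm_bound hN (@l1norm_is_norm R n) Ea).
- exact: (opnorm_bound (@l1norm_is_norm R n) hN Eb).
- by rewrite -EFinM lee_fin; lra.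
Qed.

End BanachMazurL1.

Definition entropy_epigraph (R : realType) (n : nat) (lam : R) (T : 'M[R]_n)
    (v : 'rV[R]_n) : set 'rV[R]_n :=
  [set z | exists p t, [/\ probvec p, entropy2 p <= t, t <= log2 (n%:R : R) &
                          z = lam *: (p *m invmx T) + t *: v]].

Section EntropyEpigraph.
Variables (R : realType) (n : nat) (N : 'rV[R]_n -> R) (eps a b S : R).
Variables (T : 'M[R]_n) (v : 'rV[R]_n).
Hypotheses (hN : is_norm N) (heps : 0 < eps < 3) (hn : (4 <= n)%N) (hT : T \in unitmx).
Hypotheses (ha : 0 < a) (hab : 1 <= a * b).
Hypotheses (hTa : forall x, l1norm (x *m T) <= a * N x)
  (hTb : forall y, N (y *m invmx T) <= b * l1norm y).
Hypotheses (hS0 : 0 < S) (hS : forall x, coord_sum T x <= S * N x)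
  (hv1 : N v <= 1) (hv : S * (1 - eps / (2 * log2 n%:R)) < coord_sum T v).

Local Notation L := (log2 (n%:R : R)).
Let lam := 4 * L ^+ 2 * a / eps.
Local Notation A := (entropy_epigraph lam T v).
Local Notation bary := (lam *: (@unif R n *m invmx T)).

Let L_ge2 : 2 <= L. Proof. exact: log2_ge2. Qed.
Let eps_gt0 : 0 < eps. Proof. by case/andP: heps. Qed.
Let lam_gt0 : 0 < lam.
Proof.
have L0 : 0 < L by have := L_ge2; lra.
rewrite /lam; apply: divr_gt0; last exact: eps_gt0.
by apply: mulr_gt0 => //; apply: mulr_gt0 => //; exact: exprn_gt0.
Qed.

Lemma entropy_epigraph_mem p t : probvec p -> entropy2 p <= t -> t <= L ->
  A (lam *: (p *m invmx T) + t *: v).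
Proof. by move=> dp h1 h2; exists p, t. Qed.

(* Mixing two points of [A] overshoots the entropy constraint by at most one
   bit; lowering [t] to the entropy of the mixture moves by at most [N v]. *)
Lemma entropy_epigraph_approx_convex : approx_convex N A.
Proof.
move=> x y s [p1 [t1 [d1 h1 l1 ->]]] [p2 [t2 [d2 h2 l2 ->]]] s01.
have /andP[s0 s1] := s01.
set pm := s *: p1 + (1 - s) *: p2; set tm := s * t1 + (1 - s) * t2.
have -> : s *: (lam *: (p1 *m invmx T) + t1 *: v)
    + (1 - s) *: (lam *: (p2 *m invmx T) + t2 *: v)
    = lam *: (pm *m invmx T) + tm *: v.
  rewrite mulmxDl -!scalemxAl !scalerDr [tm *: v]scalerDl !scalerA.
  by rewrite [s * lam]mulrC [(1 - s) * lam]mulrC addrACA.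
have dm : probvec pm by exact: probvec_mix.
have hm : entropy2 pm <= tm + 1.
  apply: le_trans (entropy2_mix_le d1 d2 s01) _; rewrite lerD2r /tm.
  by apply: lerD; apply: ler_wpM2l => //; lra.
have tmL : tm <= L.
  have : s * t1 <= s * L by rewrite ler_wpM2l.
  have : (1 - s) * t2 <= (1 - s) * L by rewrite ler_wpM2l // subr_ge0.
  by rewrite /tm; lra.
apply: ge_ereal_inf; case: (leP (entropy2 pm) tm) => [le|gt].
  exists 0%:E; last by rewrite lee_fin.
  exists (lam *: (pm *m invmx T) + tm *: v); first exact: entropy_epigraph_mem.
  by rewrite subrr is_norm0.
exists (N ((tm - entropy2 pm) *: v))%:E.
  exists (lam *: (pm *m invmx T) + entropy2 pm *: v).
    by apply: entropy_epigraph_mem => //; exact: entropy2_le_log2.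
  by rewrite opprD addrACA subrr add0r -scalerBl.
rewrite lee_fin is_normZ // ler0_norm; last by rewrite subr_le0 ltW.
have Nv0 := is_norm_ge0 hN v.
have : (entropy2 pm - tm) * N v <= 1 * N v by rewrite ler_wpM2r //; lra.
by rewrite opprB mul1r => h; apply: le_trans h hv1.
Qed.

Lemma bary_in_hull : conv_hull A bary.
Proof.
have n0 : (0 < n)%N by case: n hn.
exists n, (fun i => lam *: ('e_i *m invmx T) + 0 *: v), (fun=> n%:R^-1); split.
- move=> i; apply: entropy_epigraph_mem; first exact: probvec_delta.
    by rewrite /entropy2 entropy_delta mul0r.
  by have := L_ge2; lra.
- by move=> i; rewrite invr_ge0 ler0n.
- by have [_] := probvec_unif R n0; under eq_bigr do rewrite mxE.
rewrite {1}(row_sum_delta (@unif R n)) mulmx_suml scaler_sumr.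
by apply: eq_bigr => i _; rewrite scale0r addr0 mxE -scalemxAl !scalerA mulrC.
Qed.

(* Near the uniform vector the entropy, hence [t], is about [L], and the
   functional [coord_sum T] sees the [t v] component only. *)
Lemma dist_bary_near p t : probvec p -> entropy2 p <= t -> t <= L ->
  l1norm (p - unif R n) <= eps / (2 * L) ->
  L - eps <= N (bary - (lam *: (p *m invmx T) + t *: v)).
Proof.
move=> dp hpt htL hr; have L2 := L_ge2; have e0 := eps_gt0.
have t0 : 0 <= t by apply: le_trans hpt; exact: entropy2_ge0.
have hH := entropy2_near_unif dp hn.
have rL : l1norm (p - unif R n) * L <= eps / 2.
  have -> : eps / 2 = eps / (2 * L) * L by field; lra.
  by rewrite ler_wpM2r //; lra.
have tdelta : t * (eps / (2 * L)) <= eps / 2.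
  have -> : eps / 2 = L * (eps / (2 * L)) by field; lra.
  by rewrite ler_wpM2r // divr_ge0 //; lra.
have hsum : coord_sum T (lam *: (p *m invmx T) + t *: v - bary) = t * coord_sum T v.
  rewrite coord_sumB coord_sumD !coord_sumZ !coord_sum_invmx // dp.2.
  by have [_ ->] := probvec_unif R (probvec_dim_gt0 dp); ring.
have := hS (lam *: (p *m invmx T) + t *: v - bary).
rewrite hsum -(is_normN hN) opprB => hk.
have : t * (1 - eps / (2 * L)) <= N (bary - (lam *: (p *m invmx T) + t *: v)).
  rewrite -(@ler_pM2l _ S) //; apply: le_trans hk.
  by rewrite mulrCA ler_wpM2l // ltW.
lra.
Qed.

(* Far from the uniform vector the [lam]-scaled [l1] distance dominates. *)
Lemma dist_bary_far p t : probvec p -> 0 <= t <= L ->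
  eps / (2 * L) < l1norm (p - unif R n) ->
  L - eps <= N (bary - (lam *: (p *m invmx T) + t *: v)).
Proof.
move=> dp /andP[t0 htL] hr; have L2 := L_ge2; have e0 := eps_gt0.
set X := (unif R n - p) *m invmx T.
have -> : bary - (lam *: (p *m invmx T) + t *: v) = lam *: X - t *: v.
  by rewrite /X mulmxBl scalerBr opprD addrA.
apply: le_trans (is_norm_lerB hN _ _).
rewrite !is_normZ // gtr0_norm // ger0_norm //.
have hX : l1norm (p - unif R n) <= a * N X.
  by have := hTa X; rewrite /X mulmxKV // -(is_normN (@l1norm_is_norm R n)) opprB.
have c0 : 0 < 4 * L ^+ 2 / eps by rewrite divr_gt0 // mulr_gt0 // exprn_gt0 //; lra.
have hl : 2 * L < lam * N X.
  have -> : lam * N X = 4 * L ^+ 2 / eps * (a * N X) by rewrite /lam; ring.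
  apply: lt_le_trans (ler_wpM2l (ltW c0) hX).
  have -> : 2 * L = 4 * L ^+ 2 / eps * (eps / (2 * L)) by field; lra.
  by rewrite ltr_pM2l.
have : t * N v <= L by apply: le_trans (_ : t * 1 <= L); rewrite ?ler_wpM2l ?mulr1.
lra.
Qed.

Lemma entropy_epigraph_hausdorff_ge : ((L - eps)%:E <= hausdorff N A (conv_hull A))%E.
Proof.
rewrite /hausdorff le_max; apply/orP; right.
apply: le_trans (_ : (dist_set N bary A <= _)%E); last first.
  by apply: ereal_sup_ubound; exists bary => //; exact: bary_in_hull.
apply: le_ereal_inf_tmp => _ [_ [p [t [dp hpt htL ->]]] <-]; rewrite lee_fin.
have t0 : 0 <= t by apply: le_trans hpt; exact: entropy2_ge0.
have [hr|hr] := leP (l1norm (p - unif R n)) (eps / (2 * L)).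
  exact: dist_bary_near.
by apply: dist_bary_far; rewrite ?t0.
Qed.

Lemma entropy_epigraph_diam_le : (diam N A <= (11 / eps * L ^+ 2 * (a * b))%:E)%E.
Proof.
apply: ge_ereal_sup => _ [x [p1 [t1 [d1 h11 h12 ->]]] [y [p2 [t2 [d2 h21 h22 ->]]] <-]].
rewrite lee_fin.
have t10 : 0 <= t1 by apply: le_trans h11; exact: entropy2_ge0.
have t20 : 0 <= t2 by apply: le_trans h21; exact: entropy2_ge0.
have -> : lam *: (p1 *m invmx T) + t1 *: v - (lam *: (p2 *m invmx T) + t2 *: v)
    = lam *: ((p1 - p2) *m invmx T) + (t1 - t2) *: v.
  by rewrite mulmxBl scalerBr scalerBl opprD addrACA.
apply: le_trans (is_normD hN _ _) _; rewrite !is_normZ // gtr0_norm //.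
have b0 : 0 < b by rewrite -(pmulr_rgt0 _ ha); exact: lt_le_trans ltr01 hab.
have L2 := L_ge2; have e0 := eps_gt0.
have hp : N ((p1 - p2) *m invmx T) <= b * 2.
  apply: le_trans (hTb _) _; rewrite ler_pM2l //.
  have l1_is_norm := @l1norm_is_norm R n.
  apply: le_trans (is_normD l1_is_norm _ _) _.
  by rewrite (is_normN l1_is_norm) !l1norm_probvec.
have ht : `|t1 - t2| * N v <= L.
  apply: le_trans (_ : `|t1 - t2| * 1 <= L); first by rewrite ler_wpM2l.
  by rewrite mulr1 ler_norml; apply/andP; split; lra.
have : lam * N ((p1 - p2) *m invmx T) <= lam * (b * 2) by rewrite ler_pM2l.
have -> : 11 / eps * L ^+ 2 * (a * b) = 2 * (lam * b) + 3 / eps * L ^+ 2 * (a * b).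
  by rewrite /lam; field; lra.
have : L <= 3 / eps * L ^+ 2 * (a * b).
  have L0 : 0 <= L by lra.
  have L1 : 1 <= L by lra.
  have LL : L <= L ^+ 2 by rewrite expr2 ler_peMl.
  have e3 : 1 <= 3 / eps by rewrite ler_pdivlMr // mul1r; case/andP: heps => _ /ltW.
  apply: le_trans LL _; rewrite -mulrA.
  apply: le_trans (_ : L ^+ 2 * (a * b) <= _); first by rewrite ler_peMr ?exprn_ge0.
  by rewrite ler_peMl // mulr_ge0 ?exprn_ge0 // (le_trans ler01 hab).
lra.
Qed.

End EntropyEpigraph.

Lemma exists_approx_convex_far_from_hull (R : realType) (n : nat)
    (N : 'rV[R]_n -> R) (eps a b : R) (T : 'M[R]_n) :
  is_norm N -> 0 < eps < 3 -> (4 <= n)%N -> T \in unitmx ->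
  (forall x, l1norm (x *m T) <= a * N x) -> (forall y, N (y *m invmx T) <= b * l1norm y) ->
  exists A : set 'rV[R]_n,
    [/\ approx_convex N A, ((log2 n%:R - eps)%:E <= hausdorff N A (conv_hull A))%E &
        (diam N A <= (11 / eps * log2 (n%:R : R) ^+ 2 * (a * b))%:E)%E].
Proof.
move=> hN heps hn hT hTa hTb; have n0 : (0 < n)%N by apply: leq_trans hn.
have [a0 b0 hab] := l1_iso_consts hN n0 hT hTa hTb.
have L2 := log2_ge2 R hn; have e0 : 0 < eps by case/andP: heps.
have sum_pos : exists u, 0 < coord_sum T u.
  exists ('e_(Ordinal n0) *m invmx T).
  by rewrite coord_sum_invmx // (probvec_delta _ _).2 ltr01.
have delta0 : 0 < eps / (2 * log2 (n%:R : R)) by rewrite divr_gt0 //; lra.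
have [S [v [S0 hS hv1 hv]]] := exists_norming_vector hN (coord_sumZ T)
  (fun x => le_trans (coord_sum_le_l1 T x) (hTa x)) sum_pos delta0.
exists (entropy_epigraph (4 * log2 (n%:R : R) ^+ 2 * a / eps) T v); split.
- exact: entropy_epigraph_approx_convex hN hv1.
- exact: entropy_epigraph_hausdorff_ge hN heps hn hT a0 hTa S0 hS hv1 hv.
- exact: entropy_epigraph_diam_le hN heps hn a0 hab hTb hv1.
Qed.

Unset Implicit Arguments.

Theorem theorem4p1 (R : realType) (eps : R) (heps : 0 < eps < 3) :
  exists n0 : nat, forall (n : nat), (n0 <= n)%N ->
  forall N : 'rV[R]_n -> R, is_norm N ->
  exists A : set 'rV[R]_n,
    [/\ approx_convex N A,
        (hausdorff N A (conv_hull A) >= (log2 n%:R - eps)%:E)%E &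
        (diam N A <= (25 / eps * (log2 n%:R) ^+ 2)%:E * bm_dist_l1 N)%E].
Proof.
exists 4%N => n hn N hN; have n0 : (0 < n)%N by apply: leq_trans hn.
have k1 : (1 : R) < 25 / 11 by rewrite ltr_pdivlMr // mul1r ltr_nat.
have [T [a [b [hT hTa hTb hab]]]] := bm_dist_l1_nearly_attained hN n0 k1.
have [A [hA1 hA2 hA3]] := exists_approx_convex_far_from_hull hN heps hn hT hTa hTb.
exists A; split => //; apply: le_trans hA3 _.
have L2 := log2_ge2 R hn; have e0 : 0 < eps by case/andP: heps.
have C0 : 0 <= 11 / eps * log2 (n%:R : R) ^+ 2.
  by rewrite mulr_ge0 ?divr_ge0 ?exprn_ge0 //; lra.
have -> : 25 / eps * log2 (n%:R : R) ^+ 2 = 11 / eps * log2 (n%:R : R) ^+ 2 * (25 / 11).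
  by field; lra.
by rewrite (EFinM _ (a * b)) (EFinM _ (25 / 11)) -muleA lee_wpmul2l // lee_fin.
Qed.
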